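(* Let $n$ be a positive integer. Every eigenvalue of the Fibonacci--Redheffer matrix $F_R(n)$ has geometric multiplicity $1$.
   Context: The Fibonacci numbers are $F_1=F_2=1$, $F_n=F_{n-1}+F_{n-2}$ for $n\ge 3$. The Fibonacci--Redheffer matrix $F_R(n)=[F_R(i,j)]_{i,j=1}^n$ is defined by $F_R(i,j)=1$ if $j=1$; $F_R(i,j)=F_i$ if $i\mid j$; and $F_R(i,j)=0$ otherwise. The geometric multiplicity of an eigenvalue $\lambda$ is the dimension of the null space of $F_R(n)-\lambda I_n$. *)

From HB Require Import structures.
From mathcomp Require Import all_boot all_order all_algebra all_field.
Set Implicit Arguments. Unset Strict Implicit. Unset Printing Implicit Defensive.
Import GRing.Theory Num.Theory.
Local Open Scope ring_scope.

Fixpoint fib (k : nat) : nat :=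
  match k with
  | 0 => 0
  | 1 => 1
  | (k'.+1 as k1).+1 => fib k1 + fib k'
  end.

(* Fibonacci--Redheffer matrix F_R(n) over the algebraic complex numbers.
   Index i : 'I_n stands for the paper's row index i+1 (1-based). *)
Definition fib_redheffer (n : nat) : 'M[algC]_n :=
  \matrix_(i < n, j < n)
    if (j.+1 == 1)%N then 1
    else if (i.+1 %| j.+1)%N then (fib i.+1)%:R
    else 0.

From mathcomp Require Import all_boot all_order all_algebra all_field.
Import Order.TTheory GRing.Theory Num.Theory.
Set Implicit Arguments. Unset Strict Implicit. Unset Printing Implicit Defensive.
Local Open Scope ring_scope.

(* A left eigenvector u (u F = lambda u) satisfies, in every column j >= 2,
   (lambda - F_j) u_j = \sum_(i | j, i < j) F_i u_i, so it is determined by u_1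
   together with its coordinates at the j >= 2 with F_j = lambda; since the
   Fibonacci numbers increase strictly from F_2 on, there is at most one such
   j, say k.  If there is one, then u_1 = 0: otherwise, normalising u_1 = 1,
   induction gives u_j > 0 for all j < k, and column k reads 0 = (a positive
   sum).  Either way u is determined by a single coordinate. *)

Lemma kermx_rank_le1 (F : fieldType) m n (B : 'M[F]_(m, n)) (p : 'I_m) :
  (forall u : 'rV_m, u *m B = 0 -> u 0 p = 0 -> u = 0) ->
  (\rank (kermx B) <= 1)%N.
Proof.
move=> ker_inj; pose e : 'cV[F]_m := delta_mx p 0.
rewrite -(mxrank_mul_ker _ e).
suff -> : \rank (kermx B :&: kermx e)%MS = 0%N by rewrite addn0 rank_leq_col.
apply/eqP; rewrite mxrank_eq0 -submx0; apply/rV_subP => u.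
rewrite sub_capmx submx0 => /andP[/sub_kermxP uB /sub_kermxP ue].
apply/eqP/ker_inj => //.
by move/matrixP: ue => /(_ 0 0); rewrite -colE !mxE.
Qed.

Lemma ord_strong_ind n (P : 'I_n -> Prop) :
  (forall j : 'I_n, (forall i : 'I_n, (i < j)%N -> P i) -> P j) ->
  forall j, P j.
Proof.
move=> IH; suff H m (j : 'I_n) : (j < m)%N -> P j by move=> j; apply: (H j.+1).
elim: m j => // m IHm j; rewrite ltnS => jm.
by apply: IH => i ij; apply: IHm; apply: leq_trans ij jm.
Qed.

Lemma proper_divisor_ltn i j : (i.+1 %| j.+1)%N -> i != j -> (i < j)%N.
Proof.
move=> /(dvdn_leq (ltn0Sn _)); rewrite ltnS leq_eqVlt => /orP[/eqP->|] //.
by rewrite eqxx.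
Qed.

Lemma fib_gt0 k : (0 < fib k.+1)%N.
Proof.
elim/ltn_ind: k => -[|[|k]] IH //.
by rewrite [fib _](_ : _ = fib k.+2 + fib k.+1)%N // addn_gt0 IH.
Qed.

Lemma fib_lt : {in [pred k | 2 <= k]%N &, {homo fib : i j / (i < j)%N}}.
Proof.
apply: homo_ltn_in => [y x z|i j i2 _ k /andP[ik _]|[|[|k]] // _ _].
- exact: ltn_trans.
- exact: leq_trans i2 (ltnW ik).
- rewrite [fib k.+3](_ : _ = fib k.+2 + fib k.+1)%N //.
  by rewrite -[X in (X < _)%N]addn0 ltn_add2l fib_gt0.
Qed.

Section WeightedRedheffer.

Variables (R : numFieldType) (a : nat -> R).

Definition weighted_redheffer n : 'M[R]_n :=
  \matrix_(i < n, j < n)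
    if (j.+1 == 1)%N then 1 else if (i.+1 %| j.+1)%N then a i.+1 else 0.

Variable n : nat.

Local Notation W := (weighted_redheffer n.+1).

Lemma weighted_redheffer_left_eigen_col lambda (u : 'rV_n.+1) (j : 'I_n.+1) :
  (0 < j)%N -> u *m (W - lambda%:M) = 0 ->
  (lambda - a j.+1) * u 0 j =
  \sum_(i < n.+1 | (i.+1 %| j.+1)%N && (i != j)) a i.+1 * u 0 i.
Proof.
move=> j0 /eqP; rewrite mulmxBr mul_mx_scalar subr_eq0 => /eqP/rowP/(_ j).
have j1 : (j.+1 == 1)%N = false by rewrite eqSS eqn0Ngt j0.
rewrite !mxE.
under eq_bigr => i _ do rewrite mxE j1 (fun_if (GRing.mul (u 0 i))) mulr0 mulrC.
rewrite -big_mkcond (bigD1 j) ?dvdnn //= => col_j.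
by rewrite mulrBl -col_j addrAC subrr add0r.
Qed.

Lemma weighted_redheffer_left_eigen_eq0 lambda (u : 'rV_n.+1) :
  u *m (W - lambda%:M) = 0 -> u 0 0 = 0 ->
  (forall j : 'I_n.+1, (0 < j)%N -> a j.+1 = lambda -> u 0 j = 0) ->
  u = 0.
Proof.
move=> hu u0 u_eigen; apply/rowP => j; rewrite mxE.
elim/ord_strong_ind: j => j IH; case: (posnP j) => [j_eq0|j0].
  by rewrite (_ : j = 0) //; apply: val_inj.
have [aj|aj_neq] := eqVneq (a j.+1) lambda; first exact: u_eigen.
have := weighted_redheffer_left_eigen_col j0 hu.
rewrite big1 => [/eqP|i /andP[ij ineq]]; last first.
  by rewrite IH ?mulr0 // proper_divisor_ltn.
by rewrite mulf_eq0 subr_eq0 eq_sym (negbTE aj_neq) => /eqP.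
Qed.

Hypothesis a_gt0 : forall k, 0 < a k.+1.
Hypothesis a_lt :
  {in [pred k | 2 <= k]%N &, {homo a : i j / (i < j)%N >-> i < j}}.

Lemma weight_inj i j :
  (0 < i)%N -> (0 < j)%N -> a i.+1 = a j.+1 -> i = j.
Proof.
move=> i0 j0 aij; case: (ltngtP i j) => [ij|ji|//].
  by move: (@a_lt i.+1 j.+1 i0 j0 ij); rewrite aij ltxx.
by move: (@a_lt j.+1 i.+1 j0 i0 ji); rewrite aij ltxx.
Qed.

Lemma weighted_redheffer_left_eigen_first_eq0 (k : 'I_n.+1) (u : 'rV_n.+1) :
  (0 < k)%N -> u *m (W - (a k.+1)%:M) = 0 -> u 0 0 = 0.
Proof.
move=> k0 hu; have [//|u0_neq0] := eqVneq (u 0 0) 0; exfalso.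
pose w := (u 0 0)^-1 *: u.
have hw : w *m (W - (a k.+1)%:M) = 0 by rewrite -scalemxAl hu scaler0.
have w0 : w 0 0 = 1 by rewrite mxE mulVf.
have divisor_sum_gt0 (j : 'I_n.+1) : (0 < j)%N ->
    (forall i : 'I_n.+1, (i < j)%N -> 0 < w 0 i) ->
    0 < \sum_(i < n.+1 | (i.+1 %| j.+1)%N && (i != j)) a i.+1 * w 0 i.
  move=> j0 w_gt0; rewrite (bigD1 0) /=; last first.
    by rewrite dvd1n; apply: contraTneq j0 => <-.
  rewrite w0 mulr1 ltr_wpDr ?a_gt0 // sumr_ge0 // => i /andP[/andP[idvd ij] _].
  by rewrite mulr_ge0 ?ltW ?a_gt0 ?w_gt0 ?proper_divisor_ltn.
have w_gt0 : forall j : 'I_n.+1, (j < k)%N -> 0 < w 0 j.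
  elim/ord_strong_ind => j IH jk; case: (posnP j) => [j_eq0|j0].
    by rewrite (_ : j = 0) ?w0 //; apply: val_inj.
  have a_gap : 0 < a k.+1 - a j.+1 by rewrite subr_gt0 a_lt // ltnS.
  rewrite -(pmulr_rgt0 _ a_gap) (weighted_redheffer_left_eigen_col j0 hw).
  by apply: divisor_sum_gt0 => // i ij; apply: IH ij (ltn_trans ij jk).
have := divisor_sum_gt0 k k0 w_gt0.
by rewrite -(weighted_redheffer_left_eigen_col k0 hw) subrr mul0r ltxx.
Qed.

Lemma weighted_redheffer_eigenspace_rank_le1 lambda :
  (\rank (eigenspace W lambda) <= 1)%N.
Proof.
rewrite /eigenspace.
case: (pickP [pred k : 'I_n.+1 | (0 < k)%N && (a k.+1 == lambda)]) => [k|no_k].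
  case/andP=> k0 /eqP ak; apply: (kermx_rank_le1 (p := k)) => u hu uk.
  have u0 : u 0 0 = 0.
    by apply: (weighted_redheffer_left_eigen_first_eq0 k0); rewrite ak.
  apply: (weighted_redheffer_left_eigen_eq0 hu u0) => j j0 aj.
  suff -> : j = k by [].
  by apply/val_inj/(weight_inj j0 k0); rewrite aj.
apply: (kermx_rank_le1 (p := 0)) => u hu u0.
apply: (weighted_redheffer_left_eigen_eq0 hu u0) => j j0 aj.
by have := no_k j; rewrite /= j0 aj eqxx.
Qed.

End WeightedRedheffer.

Theorem lemma3 (n : nat) (hn : (0 < n)%N) (lambda : algC) :
  eigenvalue (fib_redheffer n) lambda ->
  \rank (eigenspace (fib_redheffer n) lambda) = 1%N.
Proof.
move=> ev; apply/eqP; rewrite eqn_leq lt0n mxrank_eq0; apply/andP; split=> //.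
case: n hn {ev} => // n _.
apply: (weighted_redheffer_eigenspace_rank_le1 (a := fun k => (fib k)%:R)).
  by move=> k; rewrite ltr0n fib_gt0.
by move=> i j i2 j2 ij; rewrite ltr_nat fib_lt.
Qed.
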